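(* Consider a persuasion instance in the public mode, and fix a representative set $\bar{\mathcal A}$. For every stable public policy $\sigma:\Omega\to\Delta(\mathcal A\times G)$ there exists a stable public policy $\bar\sigma:\Omega\to\Delta(C)$, where $$C=\{(\bar{\mathbf a},\beta):\bar{\mathbf a}\in\bar{\mathcal A},\ \beta\in B^{\mathrm{pub}}_{\rho_{\bar{\mathbf a}}}\},$$ such that $u_0(\bar\sigma)\ge u_0(\sigma)$. Here a meta-signal $c=(\bar{\mathbf a},\beta)\in C$ recommends the joint action $\bar{\mathbf a}$ and carries $\beta$ as its additional (publicly observed) information. Moreover, for every $c\in C$ sent by $\bar\sigma$ with positive probability, the public signature of $c$ (under $\bar\sigma$) is exactly $c$.
   Context: A persuasion instance consists of: a finite set $\Omega$ of worlds; a prior $\mu\in\Delta(\Omega)$; agents $N=\{1,\dots,n\}$; a finite action set $A$; a partition $\mathcal T$ of $N$ into nonempty sets called types; for each $T\in\mathcal T$ a utility $u_T(a,\rho\mid\omega)\in\mathbb R$ defined for $a\in A$, action profiles $\rho$, and $\omega\in\Omega$; a principal utility $u_0(\rho\mid\omega)\in\mathbb R$; and an integer $d\ge 1$ (maximum coalition size). Joint actions are $\mathbf a\in\mathcal A=A^n$; the action profile of $\mathbf a$ is $\rho_{\mathbf a}:\mathcal T\times A\to\mathbb Z_{\ge0}$, $\rho_{\mathbf a}(T,a)=|\{i\in T:a_i=a\}|$. For $i\in T$, $u_i(\mathbf a\mid\omega)=u_T(a_i,\rho_{\mathbf a}\mid\omega)$; for $p\in\Delta(\Omega)$ write $u(\cdot\mid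 p)=\mathbb E_{\omega\sim p}u(\cdot\mid\omega)$. A policy is a map $\sigma:\Omega\to\Delta(\mathcal A\times G)$ (finitely supported distributions), where $G$ is a set of tuples $\mathbf g=(g_i)_{i\in N}$; elements $s=(\mathbf a,\mathbf g)$ are meta-signals. The part $s_i$ of $s$ observed by agent $i$ is $s_i=(\mathbf a,\mathbf g)$ in the public mode, $s_i=(\mathbf a,g_i)$ in the semi-private mode, and $s_i=(a_i,g_i)$ in the private mode. Agent $i$'s posterior upon observing $s_i$ is $\Pr(\tilde{\mathbf a},\omega\mid s_i)=\mu(\omega)\,\sigma(\{s'=(\tilde{\mathbf a},\mathbf g'):s'_i=s_i\}\mid\omega)\big/\sum_{\omega'}\mu(\omega')\,\sigma(\{s':s'_i=s_i\}\mid\omega')$. A meta-signal $s$ is unstable if there exist a nonempty $N'\subseteq N$ with $|N'|\le d$ and actions $(a'_i)_{i\in N'}$ such that for every $i\in N'$: $\sum_{\tilde{\mathbf a},\omega}\Pr(\tilde{\mathbf a},\omega\mid s_i)\,\big(u_i(\tilde{\mathbf a}\oplus\mathbf a'\mid\omega)-u_i(\tilde{\mathbf a}\mid\omega)\big)>0$, where $\tilde{\mathbf a}\oplus\mathbf a'$ replaces $\tilde a_i$ by $a'_i$ for all $i\in N'$; otherwise $s$ is stable. A policy is stable if every meta-signal it sends with positive probability is stable. The principal's utility is $u_0(\sigma)=\sum_\omega\mu(\omega)\sum_{(\mathbf a,\mathbf g)}\sigma((\mathbf a,\mathbf g)\mid\omega)\,u_0(\rho_{\mathbf a}\mid\omega)$.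 A representative set $\bar{\mathcal A}\subseteq\mathcal A$ contains, for each action profile $\rho$ realizable by some joint action, exactly one $\bar{\mathbf a}$ with $\rho_{\bar{\mathbf a}}=\rho$; $\bar{\mathbf a}$ is the representative of every $\mathbf a$ with $\rho_{\mathbf a}=\rho$. Deviations: $D_*$ is the set of functions $\delta:\mathcal T\times A\times A\to\mathbb Z_{\ge0}$ with $1\le\sum_{T,a,a'}\delta(T,a,a')\le d$ and $\delta(T,a,a)=0$ for all $T,a$; for a profile $\rho$, $D_\rho=\{\delta\in D_*:\sum_{a'}\delta(T,a,a')\le\rho(T,a)\ \forall T,a\}$; and $(\rho\oplus\delta)(T,a)=\rho(T,a)-\sum_{a'}\delta(T,a,a')+\sum_{a''}\delta(T,a'',a)$. The public blocking profile of a meta-signal $s=(\mathbf a,\mathbf g)$ with posterior $p_s=\Pr(\cdot\mid s)\in\Delta(\Omega)$ is $\beta=\{(\delta,T,a,a')\in D_{\rho_{\mathbf a}}\times\mathcal T\times A^2:\delta(T,a,a')>0,\ u_T(a,\rho_{\mathbf a}\mid p_s)\ge u_T(a',\rho_{\mathbf a}\oplus\delta\mid p_s)\}$. $B^{\mathrm{pub}}_\rho$ is the set of all subsets $\beta\subseteq D_\rho\times\mathcal T\times A^2$ such that every $(\delta,T,a,a')\in\beta$ has $\delta(T,a,a')>0$ and, for every $\delta\in D_\rho$, some element of $\beta$ has first coordinate $\delta$. The public signature of $s=(\mathbf a,\mathbf g)$ is $(\bar{\mathbf a},\beta)$ where $\bar{\mathbf a}$ is the representative of $\mathbf a$ and $\beta$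 is the public blocking profile of $s$. *)

From HB Require Import structures.
From mathcomp Require Import all_boot all_order all_algebra.
Set Implicit Arguments. Unset Strict Implicit. Unset Printing Implicit Defensive.
Import Order.TTheory GRing.Theory Num.Theory.
Local Open Scope ring_scope.

(* Types are encoded by a labelling [tp : 'I_n -> K];
   the type of agent i is the fibre of tp i (the partition T of N is the set of
   nonempty fibres; nonemptiness of every label is the hypothesis [tp_surj]).
   Action profiles are functions K * A -> nat. *)
Record instance (R : realFieldType) := Instance {
  Omega : finType;
  mu : Omega -> R;
  n : nat;
  A : finType;
  K : finType;
  tp : 'I_n -> K;
  u : K -> A -> {ffun K * A -> nat} -> Omega -> R;
  u0 : {ffun K * A -> nat} -> Omega -> R;
  d : nat                          (* maximum coalition size *)
}.
Arguments Omega {R} i.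
Arguments mu {R} i _.
Arguments n {R} i.
Arguments A {R} i.
Arguments K {R} i.
Arguments tp {R} i _.
Arguments u {R} i _ _ _ _.
Arguments u0 {R} i _ _.
Arguments d {R} i.

Section Defs.
Variable R : realFieldType.
Variable I : instance R.

Definition wf_instance : Prop :=
  [/\ (forall w, 0 <= mu I w), \sum_(w : Omega I) mu I w = 1,
      (forall k : K I, exists i : 'I_(n I), tp I i = k) & (0 < d I)%N].

Definition jact := {ffun 'I_(n I) -> A I}.
Definition profile := {ffun K I * A I -> nat}.

Definition prof (a : jact) : profile :=
  [ffun ta : K I * A I => #|[set i : 'I_(n I) | (tp I i == ta.1) && (a i == ta.2)]|].

Definition uag (a : jact) (i : 'I_(n I)) (w : Omega I) : R :=
  u I (tp I i) (a i) (prof a) w.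

Definition replace (N' : {set 'I_(n I)}) (a a' : jact) : jact :=
  [ffun i => if i \in N' then a' i else a i].

Definition is_rep_set (Abar : {set jact}) : Prop :=
  (forall a : jact, exists2 ab, ab \in Abar & prof ab = prof a) /\
  {in Abar &, forall a1 a2, prof a1 = prof a2 -> a1 = a2}.

(* the representative of a (well defined when Abar is a representative set) *)
Definition rep_of (Abar : {set jact}) (a : jact) : jact :=
  odflt a [pick ab in Abar | prof ab == prof a].

(* Deviations.  Since sum delta <= d, every entry of delta is <= d, so delta
   is encoded as a finite function with values in 'I_(d+1). *)
Definition dev := {ffun K I * A I * A I -> 'I_(d I).+1}.
Definition dsum (de : dev) : nat := (\sum_(x : K I * A I * A I) (de x : nat))%N.

Definition Dstar : {set dev} :=
  [set de : dev | (1 <= dsum de <= d I)%N &&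
                  [forall ta : K I * A I, (de (ta.1, ta.2, ta.2) : nat) == 0%N]].

Definition Drho (rho : profile) : {set dev} :=
  [set de in Dstar | [forall ta : K I * A I,
      (\sum_(a' : A I) (de (ta.1, ta.2, a') : nat) <= rho ta)%N]].

Definition padd (rho : profile) (de : dev) : profile :=
  [ffun ta : K I * A I =>
     (rho ta - \sum_(a' : A I) (de (ta.1, ta.2, a') : nat)
             + \sum_(a'' : A I) (de (ta.1, a'', ta.2) : nat))%N].

Definition uexp (T : K I) (a : A I) (rho : profile) (p : Omega I -> R) : R :=
  \sum_(w : Omega I) p w * u I T a rho w.

Definition Bpub (rho : profile) (be : {set dev * K I * A I * A I}) : bool :=
  [forall x in be, let: (de, T, a, a') := x in (de \in Drho rho) && (0 < de (T, a, a'))%N]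
  && [forall de in Drho rho, exists x in be, x.1.1.1 == de].

Section Policy.
Variable G : eqType.
Notation sig := (jact * G)%type.

Definition is_policy_on (S : seq sig) (sigma : Omega I -> sig -> R) : Prop :=
  [/\ uniq S, (forall w s, 0 <= sigma w s),
      (forall w s, s \notin S -> sigma w s = 0) &
      (forall w, \sum_(s <- S) sigma w s = 1)].

Variable S : seq sig.
Variable sigma : Omega I -> sig -> R.

Definition prob_sent (s : sig) : R := \sum_(w : Omega I) mu I w * sigma w s.

(* Posterior Pr(ta, w | s_i) of an agent whose observation map is [obs]
   (s_i = obs s). *)
Definition posterior (Y : eqType) (obs : sig -> Y) (y : Y) (ta : jact) (w : Omega I) : R :=
  (mu I w * \sum_(s' <- S | (obs s' == y) && (s'.1 == ta)) sigma w s') /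
  (\sum_(w' : Omega I) mu I w' * \sum_(s' <- S | obs s' == y) sigma w' s').

Definition unstable (Y : eqType) (obs : 'I_(n I) -> sig -> Y) (s : sig) : Prop :=
  exists N' : {set 'I_(n I)}, [/\ N' != set0, (#|N'| <= d I)%N &
    exists a' : jact, forall i, i \in N' ->
      0 < \sum_(ta : jact) \sum_(w : Omega I)
            posterior (obs i) (obs i s) ta w *
            (uag (replace N' ta a') i w - uag ta i w)].

Definition stable_policy (Y : eqType) (obs : 'I_(n I) -> sig -> Y) : Prop :=
  forall s, 0 < prob_sent s -> ~ unstable obs s.

(* public mode: every agent observes the whole meta-signal *)
Definition obs_pub : 'I_(n I) -> sig -> sig := fun _ s => s.

Definition stable_public_policy : Prop := stable_policy obs_pub.

Definition post_pub (s : sig) (w : Omega I) : R :=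
  \sum_(ta : jact) posterior id s ta w.

Definition pub_block (s : sig) : {set dev * K I * A I * A I} :=
  [set x : dev * K I * A I * A I |
     let: (de, T, a, a') := x in
     [&& de \in Drho (prof s.1), (0 < de (T, a, a'))%N &
         uexp T a' (padd (prof s.1) de) (post_pub s) <=
         uexp T a (prof s.1) (post_pub s)]].

Definition pub_signature (Abar : {set jact}) (s : sig) : jact * {set dev * K I * A I * A I} :=
  (rep_of Abar s.1, pub_block s).

Definition u0_of : R :=
  \sum_(w : Omega I) mu I w * \sum_(s <- S) sigma w s * u0 I (prof s.1) w.

End Policy.
End Defs.

From HB Require Import structures.
From mathcomp Require Import all_boot all_order all_algebra.
Import Order.TTheory GRing.Theory Num.Theory.
Set Implicit Arguments. Unset Strict Implicit. Unset Printing Implicit Defensive.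

(* Merge all meta-signals of positive probability that share a public
   signature into one signal, namely that signature.  Stability of a public
   meta-signal is equivalent to its blocking profile lying in B^pub: a
   coalition switching from a to a' is recorded by the counts delta(T,x,y) of
   its (type, old action, new action) moves, every delta in D_rho arises from
   some coalition in this way, and a move (T,x,y) is blocked exactly when the
   agent making it does not gain.  The unnormalised expected utilities behind
   the blocking profile are linear in the signal, and the merged signals pass
   or fail every comparison together, so the merged signal has their common
   blocking profile and is stable.  The principal's utility depends only on
   action profiles, which representatives preserve. *)

Lemma sum_nat_pred (T : finType) (f : T -> nat) t0 : (0 < f t0)%N ->
  (\sum_t f t = (\sum_t (f t - (t == t0))).+1)%N.
Proof.
move=> ft0; rewrite (bigD1 t0) // [in RHS](bigD1 t0) //= eqxx subn1 -addSn.
rewrite prednK //; congr (_ + _)%N.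
by apply: eq_bigr => t /negbTE ->; rewrite subn0.
Qed.

Section Coalitions.
Variables (R : realFieldType) (I : instance R).
Implicit Types (a b : jact I) (M : {set 'I_(n I)}) (t : K I * A I * A I).

Definition move_of a b (i : 'I_(n I)) : K I * A I * A I := (tp I i, a i, b i).

Definition move_count a M b t : nat :=
  #|[set i | (i \in M) && (move_of a b i == t)]|.

Lemma sum_move_count a M b : \sum_t move_count a M b t = #|M|.
Proof.
rewrite -sum1_card [RHS](partition_big (move_of a b) predT) //.
by apply: eq_bigr => t _; rewrite /move_count -sum1dep_card.
Qed.

Lemma sum_move_count_from a M b T x :
  \sum_y move_count a M b (T, x, y) =
  #|[set i | (i \in M) && (tp I i == T) && (a i == x)]|.
Proof.
rewrite -sum1dep_card [RHS](partition_big b predT) //.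
apply: eq_bigr => y _; rewrite /move_count -sum1dep_card; apply: eq_bigl => i.
by rewrite !xpair_eqE !andbA.
Qed.

Lemma sum_move_count_to a M b T y :
  \sum_x move_count a M b (T, x, y) =
  #|[set i | (i \in M) && (tp I i == T) && (b i == y)]|.
Proof.
rewrite -sum1dep_card [RHS](partition_big a predT) //.
apply: eq_bigr => x _; rewrite /move_count -sum1dep_card; apply: eq_bigl => i.
by rewrite !xpair_eqE -!andbA; do 2!congr (_ && _); rewrite andbC.
Qed.

Lemma prof_replace a M b T y :
  prof (replace M a b) (T, y) =
  (prof a (T, y) - \sum_z move_count a M b (T, y, z)
                 + \sum_x move_count a M b (T, x, y))%N.
Proof.
rewrite sum_move_count_from sum_move_count_to !ffunE /= -!sum1dep_card.
rewrite (bigID (mem M)) [in RHS](bigID (mem M)) /=.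
rewrite [X in (X + _ - _ + _)%N](_ : _ = \sum_(i | (i \in M) && (tp I i == T) && (a i == y)) 1)%N;
  last by apply: eq_bigl => i; rewrite andbC andbA.
rewrite addKn addnC; congr (_ + _)%N; apply: eq_bigl => i; rewrite /replace ffunE.
  by case: (i \in M); rewrite ?andbT ?andbF.
by rewrite andbC andbA; case: (i \in M).
Qed.

Lemma move_count_witness a M b t :
  (0 < move_count a M b t)%N -> exists2 i, i \in M & move_of a b i = t.
Proof. by rewrite card_gt0 => /set0Pn [i]; rewrite inE => /andP [iM /eqP]; exists i. Qed.

Lemma move_count_gt0 a M b i : i \in M -> (0 < move_count a M b (move_of a b i))%N.
Proof. by move=> iM; rewrite card_gt0; apply/set0Pn; exists i; rewrite inE iM eqxx. Qed.

Lemma move_count0 a b t : move_count a set0 b t = 0%N.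
Proof. by apply/eqP; rewrite cards_eq0; apply/eqP/setP => i; rewrite !inE. Qed.

Lemma move_count_setU1 a M b i y t : i \notin M ->
  move_count a (i |: M) [ffun j => if j == i then y else b j] t =
  (move_count a M b t + (move_of a [ffun j => if j == i then y else b j] i == t))%N.
Proof.
move=> iM; rewrite /move_count -!sum1dep_card (bigID (pred1 i)) /= addnC.
congr (_ + _)%N.
  apply: eq_bigl => j; rewrite in_setU1 /move_of ffunE.
  by case: eqVneq => [->|]; rewrite ?(negbTE iM) ?andbF // andbT.
rewrite (eq_bigl (fun j => (j == i) && (move_of a [ffun j => if j == i then y else b j] i == t))).
  case: (move_of _ _ i == t); last by rewrite big_pred0 // => j; rewrite andbF.
  by rewrite (big_pred1 i) // => j; rewrite andbT.
by move=> j /=; case: (eqVneq j i) => [->|]; rewrite ?setU11 ?andbF ?andbT.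
Qed.

Lemma exists_unmoved a M b T x :
  (\sum_y move_count a M b (T, x, y) < prof a (T, x))%N ->
  exists i, [/\ i \notin M, tp I i = T & a i = x].
Proof.
rewrite sum_move_count_from ffunE /=.
case: (pickP (fun i => (i \notin M) && (tp I i == T) && (a i == x))) => [i|none lt].
  by case/andP => /andP [iM /eqP Ti] /eqP ai; exists i.
suff: #|[set i | (tp I i == T) && (a i == x)]| <=
      #|[set i | (i \in M) && (tp I i == T) && (a i == x)]|.
  by rewrite leqNgt lt.
apply/subset_leq_card/subsetP => i; rewrite !inE => Pi.
by move: (none i); rewrite -!andbA Pi !andbT => /negbFE.
Qed.

Lemma realize_move_counts a (f : K I * A I * A I -> nat) :
  (forall T x, \sum_y f (T, x, y) <= prof a (T, x))%N ->
  exists M b, forall t, move_count a M b t = f t.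
Proof.
move: {2}(\sum_t f t)%N (erefl (\sum_t f t)%N) => m.
elim: m f => [|m IH] f sum_f row_f.
  exists set0, a => t; rewrite move_count0.
  by move/eqP: sum_f; rewrite sum_nat_eq0 => /forallP /(_ t) /eqP.
have [[[T x] y] ft] : exists t, (0 < f t)%N.
  case: (pickP (fun t => 0 < f t)%N) => [t ft|none]; first by exists t.
  by move: sum_f; rewrite big1 // => t _; apply/eqP; rewrite -leqn0 leqNgt none.
pose g t := (f t - (t == (T, x, y)))%N.
have sum_g : (\sum_t g t)%N = m by apply/eq_add_S; rewrite -(sum_nat_pred ft).
have row_g T' x' : (\sum_z g (T', x', z) <= prof a (T', x'))%N.
  by apply: leq_trans (row_f T' x'); apply: leq_sum => z _; apply: leq_subr.
have [M [b count_g]] := IH g sum_g row_g.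
have [i [iM Ti ai]] : exists i, [/\ i \notin M, tp I i = T & a i = x].
  apply: (exists_unmoved (b := b)); apply: leq_trans (row_f T x).
  rewrite (sum_nat_pred (f := fun z => f (T, x, z)) (t0 := y) ft) ltnS.
  by apply/eq_leq/eq_bigr => z _; rewrite count_g /g !xpair_eqE !eqxx.
exists (i |: M), [ffun j => if j == i then y else b j] => t.
rewrite move_count_setU1 // count_g /g /move_of ffunE eqxx Ti ai eq_sym.
by case: (eqVneq t (T, x, y)) => [->|ne]; rewrite ?subn0 ?addn0 // subnK.
Qed.

Lemma replace_movers a M b : replace [set i in M | b i != a i] a b = replace M a b.
Proof.
apply/ffunP => i; rewrite !ffunE inE; case: (i \in M) => //=.
by case: (eqVneq (b i) (a i)) => [->|].
Qed.

Lemma replace0 a b : replace set0 a b = a.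
Proof. by apply/ffunP => i; rewrite ffunE in_set0. Qed.

Definition dev_of a M b : dev I := [ffun t => inord (move_count a M b t)].

Lemma dev_ofE a M b t :
  (#|M| <= d I)%N -> dev_of a M b t = move_count a M b t :> nat.
Proof.
move=> Md; rewrite ffunE inordK // ltnS; apply: leq_trans Md.
by rewrite -(sum_move_count a M b) (bigD1 t) //= leq_addr.
Qed.

Lemma dev_of_Drho a M b : M != set0 -> (#|M| <= d I)%N ->
  {in M, forall i, b i != a i} -> dev_of a M b \in Drho (prof a).
Proof.
move=> M0 Md Mb; rewrite !inE /dsum.
under eq_bigr => t _ do rewrite dev_ofE //.
rewrite sum_move_count card_gt0 M0 Md /=; apply/andP; split.
  apply/forallP => -[T x] /=; rewrite dev_ofE // eqn0Ngt.
  apply/negP => /move_count_witness [i iM [_ ai bi]].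
  by move: (Mb i iM); rewrite ai bi eqxx.
apply/forallP => -[T x] /=.
under eq_bigr => y _ do rewrite dev_ofE //.
rewrite sum_move_count_from ffunE; apply/subset_leq_card/subsetP => i.
by rewrite !inE -andbA => /andP [].
Qed.

Lemma prof_replace_dev a M b : (#|M| <= d I)%N ->
  prof (replace M a b) = padd (prof a) (dev_of a M b).
Proof.
move=> Md; apply/ffunP => -[T y]; rewrite prof_replace [RHS]ffunE /=.
by congr (_ - _ + _)%N; apply: eq_bigr => z _; rewrite dev_ofE.
Qed.

Lemma Drho_dev_of a de : de \in Drho (prof a) ->
  exists M b, [/\ M != set0, (#|M| <= d I)%N & dev_of a M b = de].
Proof.
rewrite !inE => /andP [/andP [/andP [de_gt0 de_le] _] /forallP row].
have [M [b count]] := realize_move_counts (f := fun t => de t : nat) (fun T x => row (T, x)).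
have cardM : #|M| = dsum de.
  by rewrite -(sum_move_count a M b); apply: eq_bigr => t _; rewrite count.
exists M, b; split; first by rewrite -card_gt0 cardM.
  by rewrite cardM.
by apply/ffunP => t; apply: val_inj; rewrite /= dev_ofE ?cardM // count.
Qed.
End Coalitions.

Local Open Scope ring_scope.

Lemma big_undup_fibers (V : nmodType) (T C : eqType) (r : seq T) (f : T -> C)
    (F : T -> V) :
  \sum_(c <- undup (map f r)) \sum_(x <- r | f x == c) F x = \sum_(x <- r) F x.
Proof.
under eq_bigr => c _ do rewrite big_mkcond.
rewrite exchange_big /=; apply: eq_big_seq => x xr.
rewrite -big_mkcond /= -big_filter.
have -> : [seq c <- undup (map f r) | f x == c] = [:: f x].
  rewrite (eq_filter (a2 := pred1 (f x))) => [|c]; last by rewrite /= eq_sym.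
  by rewrite filter_pred1_uniq ?undup_uniq // mem_undup map_f.
by rewrite big_seq1.
Qed.

Lemma has_sum_neq0 (V : nmodType) (T : eqType) (r : seq T) (P : pred T) (F : T -> V) :
  \sum_(x <- r | P x) F x != 0 -> has P r.
Proof.
apply: contraNT => /hasPn none; rewrite big1_seq // => x /andP [Px xr].
by move: (none x xr); rewrite Px.
Qed.

Lemma ler_sum_agree (R : realDomainType) (T : eqType) (r : seq T) (P : pred T)
    (F G : T -> R) x0 :
  x0 \in r -> P x0 -> {in r, forall x, P x -> (F x <= G x) = (F x0 <= G x0)} ->
  (\sum_(x <- r | P x) F x <= \sum_(x <- r | P x) G x) = (F x0 <= G x0).
Proof.
move=> x0r Px0 agree.
rewrite [X in X <= _]big_seq_cond [X in _ <= X]big_seq_cond.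
have [le0|] := boolP (F x0 <= G x0).
  by apply: ler_sum => x /andP [xr Px]; rewrite agree.
move=> nle0; apply/negbTE; rewrite -ltNge.
apply: ltr_sum => [|x /andP [xr Px]]; last by rewrite ltNge agree.
by apply/hasP; exists x0; rewrite ?x0r ?Px0.
Qed.

Section PublicPosterior.
Variables (R : realFieldType) (I : instance R) (G : eqType).
Variables (S : seq (jact I * G)) (sigma : Omega I -> jact I * G -> R).

Lemma posterior_pub_neq s ta w : ta != s.1 -> posterior S sigma id s ta w = 0.
Proof.
move=> ta_s; rewrite /posterior big1_seq ?mulr0 ?mul0r // => s' /andP [/andP [/eqP -> /eqP]].
by move=> eq_ta; rewrite eq_ta eqxx in ta_s.
Qed.

Lemma post_pub_posterior s w : post_pub S sigma s w = posterior S sigma id s s.1 w.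
Proof.
rewrite /post_pub (bigD1 s.1) //= big1 ?addr0 // => ta.
exact: posterior_pub_neq.
Qed.

Definition pub_gain s (M : {set 'I_(n I)}) (b : jact I) (i : 'I_(n I)) : R :=
  uexp (tp I i) (b i) (prof (replace M s.1 b)) (post_pub S sigma s)
  - uexp (tp I i) (s.1 i) (prof s.1) (post_pub S sigma s).

Lemma unstable_pubP s : unstable S sigma (obs_pub (G:=G)) s <->
  exists M b, [/\ M != set0, (#|M| <= d I)%N & {in M, forall i, 0 < pub_gain s M b i}].
Proof.
have gainE (M : {set 'I_(n I)}) (b : jact I) i : i \in M ->
  \sum_ta \sum_w posterior S sigma (obs_pub (G:=G) i) (obs_pub i s) ta w *
                 (uag (replace M ta b) i w - uag ta i w) = pub_gain s M b i.
  move=> iM; rewrite (bigD1 s.1) //= [X in _ + X]big1 ?addr0; last first.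
    by move=> ta ta_s; apply: big1 => w _; rewrite posterior_pub_neq ?mul0r.
  rewrite /pub_gain /uexp -sumrB; apply: eq_bigr => w _.
  by rewrite post_pub_posterior /uag /replace ffunE iM -mulrBr.
split.
  by move=> [M [M0 Md [b gain_pos]]]; exists M, b; split=> // i iM; rewrite -gainE ?gain_pos.
by move=> [M [b [M0 Md gain_pos]]]; exists M; split=> //; exists b => i iM; rewrite gainE ?gain_pos.
Qed.

Lemma pub_block_Bpub s :
  ~ unstable S sigma (obs_pub (G:=G)) s -> Bpub (prof s.1) (pub_block S sigma s).
Proof.
move=> stable_s; apply/andP; split.
  by apply/forallP => -[[[de T] x] y]; apply/implyP; rewrite inE => /and3P [-> ->].
apply/forallP => de; apply/implyP => de_Drho.
have [M [b [M0 Md de_eq]]] := Drho_dev_of de_Drho; rewrite -{}de_eq in de_Drho *.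
have [i iM gain_le0] : exists2 i, i \in M & pub_gain s M b i <= 0.
  case: (boolP [forall i in M, 0 < pub_gain s M b i]) => [/forallP gain_pos|].
    case: stable_s; apply/unstable_pubP; exists M, b; split=> // i iM.
    by have := gain_pos i; rewrite iM.
  by case/forallPn => i; rewrite negb_imply -leNgt => /andP [iM ?]; exists i.
apply/existsP; exists (dev_of s.1 M b, tp I i, s.1 i, b i); rewrite eqxx andbT inE /=.
rewrite de_Drho dev_ofE //=; apply/andP; split; first exact: move_count_gt0.
by move: gain_le0; rewrite /pub_gain subr_le0 prof_replace_dev.
Qed.

Lemma Bpub_pub_stable s :
  Bpub (prof s.1) (pub_block S sigma s) -> ~ unstable S sigma (obs_pub (G:=G)) s.
Proof.
move=> Bpub_s /unstable_pubP [M [b [M0 Md gain_pos]]].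
pose M' := [set i in M | b i != s.1 i].
have replace_M' : replace M' s.1 b = replace M s.1 b := replace_movers s.1 M b.
have M'0 : M' != set0.
  apply/negP => /eqP M'_0; case/set0Pn: M0 => i iM.
  have : i \notin M' by rewrite M'_0 in_set0.
  rewrite inE iM /= negbK => /eqP bi.
  move: (gain_pos i iM).
  by rewrite /pub_gain -replace_M' M'_0 bi replace0 subrr ltxx.
have M'd : (#|M'| <= d I)%N.
  by apply: leq_trans Md; apply/subset_leq_card/subsetP => i; rewrite inE => /andP [].
have de_Drho : dev_of s.1 M' b \in Drho (prof s.1).
  by apply: dev_of_Drho => // i; rewrite inE => /andP [].
case/andP: Bpub_s => _ /forallP /(_ (dev_of s.1 M' b)) /implyP /(_ de_Drho).
case/existsP => -[[[de T] x] y] /andP [+ /eqP /= de_eq]; subst de; rewrite inE /=.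
case/and3P => _; rewrite dev_ofE // => /move_count_witness [i].
rewrite inE => /andP [iM _] [<- <- <-] blocked.
by have := gain_pos i iM; rewrite /pub_gain -replace_M' prof_replace_dev // subr_gt0 ltNge blocked.
Qed.

Definition mass s (g : Omega I -> R) : R := \sum_w mu I w * sigma w s * g w.

Hypothesis policy_sigma : is_policy_on S sigma.

Lemma sum_policy_pred1 w s : \sum_(s' <- S | s' == s) sigma w s' = sigma w s.
Proof.
case: policy_sigma => uniqS _ sigma_out _; case: (boolP (s \in S)) => sS.
  rewrite -big_filter (_ : [seq s' <- S | s' == s] = [:: s]) ?big_seq1 //.
  exact: filter_pred1_uniq.
by rewrite sigma_out // big1_seq // => s' /andP [/eqP ->]; rewrite (negbTE sS).
Qed.

Lemma sent_mem s : 0 < prob_sent sigma s -> s \in S.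
Proof.
apply: contraTT => sS; rewrite -leNgt /prob_sent big1 // => w _.
by case: policy_sigma => _ _ -> //; rewrite mulr0.
Qed.

Lemma post_pubE s w : post_pub S sigma s w = mu I w * sigma w s / prob_sent sigma s.
Proof.
rewrite post_pub_posterior /posterior /prob_sent.
have -> : \sum_(s' <- S | (s' == s) && (s'.1 == s.1)) sigma w s' = sigma w s.
  rewrite -sum_policy_pred1; apply: eq_bigl => s'.
  by case: eqVneq => [->|]; rewrite ?eqxx.
by congr (_ / _); apply: eq_bigr => w' _; rewrite sum_policy_pred1.
Qed.

Lemma uexp_post_pub s T x rho :
  uexp T x rho (post_pub S sigma s) = mass s (u I T x rho) / prob_sent sigma s.
Proof.
rewrite /uexp /mass mulr_suml; apply: eq_bigr => w _.
by rewrite post_pubE mulrAC.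
Qed.

Lemma mem_pub_block s de T x y : 0 < prob_sent sigma s ->
  ((de, T, x, y) \in pub_block S sigma s) =
  [&& de \in Drho (prof s.1), (0 < de (T, x, y))%N &
      mass s (u I T y (padd (prof s.1) de)) <= mass s (u I T x (prof s.1))].
Proof. by move=> sent_s; rewrite inE /= !uexp_post_pub ler_pM2r ?invr_gt0. Qed.

Lemma policy_unsent s w : (forall w, 0 <= mu I w) -> mu I w != 0 ->
  ~~ (0 < prob_sent sigma s) -> sigma w s = 0.
Proof.
move=> mu_ge0 mu_w; rewrite lt_def negb_and negbK.
have terms_ge0 w' : 0 <= mu I w' * sigma w' s.
  by case: policy_sigma => _ sigma_ge0 _ _; rewrite mulr_ge0.
rewrite sumr_ge0 ?orbF // => /eqP /(psumr_eq0P (fun w' _ => terms_ge0 w')) /(_ w isT) /eqP.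
by rewrite mulf_eq0 (negbTE mu_w) => /eqP.
Qed.

End PublicPosterior.

Section Representatives.
Variables (R : realFieldType) (I : instance R) (Abar : {set jact I}).
Hypothesis rep_Abar : is_rep_set Abar.

Lemma rep_ofP a : rep_of Abar a \in Abar /\ prof (rep_of Abar a) = prof a.
Proof.
case: rep_Abar => has_rep _; rewrite /rep_of; case: pickP => [ab /andP [? /eqP] | none] //=.
by have [ab Abar_ab prof_ab] := has_rep a; move: (none ab); rewrite Abar_ab prof_ab eqxx.
Qed.

Lemma rep_of_id a : a \in Abar -> rep_of Abar a = a.
Proof.
move=> Abar_a; have [Abar_rep prof_rep] := rep_ofP a.
by case: rep_Abar => _; apply.
Qed.

End Representatives.

Section MergeBySignature.
Variables (R : realFieldType) (I : instance R) (Abar : {set jact I}).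
Variables (G : eqType) (S : seq (jact I * G)) (sigma : Omega I -> jact I * G -> R).
Hypotheses (wf_I : wf_instance I) (rep_Abar : is_rep_set Abar).
Hypotheses (policy_sigma : is_policy_on S sigma) (stable_sigma : stable_public_policy S sigma).

Local Notation sent s := (0 < prob_sent sigma s).
Local Notation signature := (pub_signature S sigma Abar).
Local Notation C := (jact I * {set dev I * K I * A I * A I})%type.

Let mu_ge0 w : 0 <= mu I w.
Proof. by case: wf_I. Qed.

Definition merged w (c : C) : R := \sum_(s <- S | sent s && (signature s == c)) sigma w s.

(* In a world of prior probability zero, sigma may put mass on signals that are
   never sent, which [merged] drops; such a world borrows the merged
   distribution of a world of positive prior. *)
Definition charged_world w : Omega I :=
  if mu I w == 0 then odflt w [pick w' | mu I w' != 0] else w.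

Definition sigma_merged w (c : C) : R := merged (charged_world w) c.

Definition S_merged : seq C := undup (map signature [seq s <- S | sent s]).

Lemma charged_world_mu w : mu I (charged_world w) != 0.
Proof.
rewrite /charged_world; case: (eqVneq (mu I w) 0) => [_|//].
case: (pickP (fun w' => mu I w' != 0)) => [w' /= -> //|none /=].
case: wf_I => _ + _ _; rewrite big1 => [/eqP|w' _]; first by rewrite eq_sym oner_eq0.
by apply/eqP; move: (none w') => /negbFE.
Qed.

Lemma mu_sigma_merged w c : mu I w * sigma_merged w c = mu I w * merged w c.
Proof. by rewrite /sigma_merged /charged_world; case: eqVneq => [->|]; rewrite ?mul0r. Qed.

Lemma sum_merged w : mu I w != 0 -> \sum_(c <- S_merged) merged w c = 1.
Proof.
move=> mu_w; rewrite /S_merged /merged.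
under eq_bigr => c _ do rewrite -big_filter_cond.
rewrite big_undup_fibers big_filter big_mkcond /=.
case: policy_sigma => _ _ _ /(_ w) <-; apply: eq_bigr => s _.
by case: ifP => // /negbT unsent; rewrite (policy_unsent policy_sigma mu_ge0 mu_w unsent).
Qed.

Lemma policy_merged : is_policy_on S_merged sigma_merged.
Proof.
split.
- exact: undup_uniq.
- by move=> w c; apply: sumr_ge0 => s _; case: policy_sigma.
- move=> w c; apply: contraNeq => /has_sum_neq0 /hasP [s sS /andP [sent_s /eqP <-]].
  by rewrite mem_undup map_f // mem_filter sent_s.
- by move=> w; rewrite sum_merged ?charged_world_mu.
Qed.

Lemma mass_merged c g :
  mass sigma_merged c g = \sum_(s <- S | sent s && (signature s == c)) mass sigma s g.
Proof.
rewrite /mass exchange_big /=; apply: eq_bigr => w _.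
by rewrite mu_sigma_merged /merged mulr_sumr mulr_suml.
Qed.

Lemma prob_sent_merged c :
  prob_sent sigma_merged c = \sum_(s <- S | sent s && (signature s == c)) prob_sent sigma s.
Proof.
rewrite /prob_sent exchange_big /=; apply: eq_bigr => w _.
by rewrite mu_sigma_merged /merged mulr_sumr.
Qed.

Lemma sent_merged c : 0 < prob_sent sigma_merged c -> exists2 s, sent s & signature s = c.
Proof.
rewrite prob_sent_merged => /gt_eqF /negbT /has_sum_neq0 /hasP [s _ /andP [sent_s /eqP]].
by exists s.
Qed.

Lemma merged_sent s : sent s -> 0 < prob_sent sigma_merged (signature s).
Proof.
move=> sent_s; rewrite prob_sent_merged.
have lt_sum := @ltr_sum _ _ S (fun s' => sent s' && (signature s' == signature s))
  (fun=> 0) (prob_sent sigma).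
rewrite big1 // in lt_sum; apply: lt_sum => [|s' /andP [] //].
by apply/hasP; exists s; rewrite ?sent_s ?eqxx //; apply: sent_mem sent_s.
Qed.

Lemma prof_signature s : prof (signature s).1 = prof s.1.
Proof. exact: (rep_ofP rep_Abar s.1).2. Qed.

Lemma pub_block_merged s0 : sent s0 ->
  pub_block S_merged sigma_merged (signature s0) = pub_block S sigma s0.
Proof.
move=> sent_s0; apply/setP => -[[[de T] x] y].
rewrite (mem_pub_block policy_merged _ _ _ _ (merged_sent sent_s0)).
rewrite (mem_pub_block policy_sigma _ _ _ _ sent_s0) !mass_merged prof_signature.
case Drho_de: (de \in _); case move_de: (0 < de (T, x, y))%N => //=.
apply: ler_sum_agree (sent_mem policy_sigma sent_s0) _ _; first by rewrite sent_s0 eqxx.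
move=> s _ /andP [sent_s /eqP sig_s].
have prof_s : prof s.1 = prof s0.1 by rewrite -(prof_signature s) sig_s prof_signature.
have block_s : pub_block S sigma s = pub_block S sigma s0 by case: sig_s.
have := mem_pub_block policy_sigma de T x y sent_s.
rewrite block_s prof_s (mem_pub_block policy_sigma _ _ _ _ sent_s0) Drho_de move_de /=.
by move=> ->.
Qed.

Lemma stable_merged : stable_public_policy S_merged sigma_merged.
Proof.
move=> c /sent_merged [s sent_s <-]; apply: Bpub_pub_stable.
by rewrite pub_block_merged // prof_signature; apply: pub_block_Bpub; apply: stable_sigma.
Qed.

Lemma pub_signature_merged c :
  0 < prob_sent sigma_merged c -> pub_signature S_merged sigma_merged Abar c = c.
Proof.
move=> /sent_merged [s sent_s <-]; rewrite /pub_signature pub_block_merged //.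
by rewrite (rep_of_id rep_Abar (rep_ofP rep_Abar s.1).1).
Qed.

Lemma merged_support w c :
  sigma_merged w c != 0 -> c.1 \in Abar /\ Bpub (prof c.1) c.2.
Proof.
move=> /has_sum_neq0 /hasP [s _ /andP [sent_s /eqP <-]].
split; first exact: (rep_ofP rep_Abar s.1).1.
by rewrite prof_signature; apply: pub_block_Bpub; apply: stable_sigma.
Qed.

Lemma u0_merged : u0_of S_merged sigma_merged = u0_of S sigma.
Proof.
apply: eq_bigr => w _; have [->|mu_w] := eqVneq (mu I w) 0; first by rewrite !mul0r.
rewrite /sigma_merged /charged_world (negbTE mu_w); congr (_ * _).
transitivity (\sum_(c <- S_merged)
    \sum_(s <- [seq s <- S | sent s] | signature s == c) sigma w s * u0 I (prof s.1) w).
  apply: eq_bigr => c _; rewrite /merged mulr_suml -big_filter_cond.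
  by apply: eq_bigr => s /eqP <-; rewrite prof_signature.
rewrite big_undup_fibers big_filter big_mkcond /=; apply: eq_bigr => s _.
case: ifP => // /negbT unsent.
by rewrite (policy_unsent policy_sigma mu_ge0 mu_w unsent) mul0r.
Qed.

End MergeBySignature.

Theorem theorem1 (R : realFieldType) (I : instance R) (Abar : {set jact I})
  (G : eqType) (S : seq (jact I * G)) (sigma : Omega I -> jact I * G -> R) :
  wf_instance I -> is_rep_set Abar ->
  is_policy_on S sigma -> stable_public_policy S sigma ->
  exists (Sb : seq (jact I * {set dev I * K I * A I * A I}))
         (sigb : Omega I -> jact I * {set dev I * K I * A I * A I} -> R),
    [/\ is_policy_on Sb sigb,
        (forall w c, sigb w c != 0 -> c.1 \in Abar /\ Bpub (prof c.1) c.2),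
        stable_public_policy Sb sigb,
        u0_of S sigma <= u0_of Sb sigb &
        (forall c, 0 < prob_sent sigb c -> pub_signature Sb sigb Abar c = c)].
Proof.
move=> wf_I rep_Abar policy_sigma stable_sigma.
exists (S_merged Abar S sigma), (sigma_merged Abar S sigma); split.
- exact: policy_merged.
- exact: merged_support.
- exact: stable_merged.
- by rewrite u0_merged.
- exact: pub_signature_merged.
Qed.
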